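(* Let $g$ be a probability density on $(0,\infty)$, let $\mu_1 \sim g$, and define $p(\zeta) = P_g(\mu_1 \le \zeta)$ and $v(\zeta) = E_g(\zeta - \mu_1)^+$. Let $\lambda > 0$ and $n \ge 1$, and for $\zeta > 0$ define $$r_n(\zeta) = \frac{\lambda}{p(\zeta)} + n\, E_g(\mu_1 \mid \mu_1 \le \zeta).$$ Let $\zeta_n$ be such that $v(\zeta_n) = \frac{\lambda}{n}$. Then $$\inf_{\zeta>0} r_n(\zeta) = r_n(\zeta_n) = n\zeta_n.$$
   Context: $a^+ = \max(0,a)$. In the paper, $\lambda = \int_0^\infty E_\mu(X \mid X>0)\, g(\mu)\, d\mu$ is the mean of the first non-zero reward of a random arm, where $X \sim F_\mu$ is a non-negative reward with mean $\mu$; $r_n(\zeta)$ is the asymptotic regret of an idealized algorithm that rejects arms with mean above $\zeta$. *)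

From HB Require Import structures.
From mathcomp Require Import all_boot all_order all_algebra.
From mathcomp Require Import all_classical all_reals all_analysis.
Set Implicit Arguments. Unset Strict Implicit. Unset Printing Implicit Defensive.
Import Order.TTheory GRing.Theory Num.Theory.
Local Open Scope classical_set_scope.
Local Open Scope ring_scope.

Section Defs.
Variable R : realType.

Definition pg (g : R -> R) (z : R) : R :=
  fine (\int[@lebesgue_measure R]_(x in ([set` `]0, z]%R] : set R)) (g x)%:E)%E.

Definition condmean (g : R -> R) (z : R) : R :=
  fine (\int[@lebesgue_measure R]_(x in ([set` `]0, z]%R] : set R)) (x * g x)%:E)%E / pg g z.

Definition vg (g : R -> R) (z : R) : R :=
  fine (\int[@lebesgue_measure R]_(x in ([set` `]0, +oo[%R] : set R)) (Num.max (z - x) 0 * g x)%:E)%E.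

Definition rn (g : R -> R) (lam : R) (n : nat) (z : R) : R :=
  lam / pg g z + n%:R * condmean g z.

End Defs.

From mathcomp Require Import all_boot all_order all_algebra.
From mathcomp Require Import all_classical all_reals all_analysis.
From mathcomp Require Import measurable_realfun ring.
Import Order.TTheory GRing.Theory Num.Theory.
Local Open Scope classical_set_scope.
Local Open Scope ring_scope.

(* For a threshold t and any x one has t <= (t - x)^+ + x, with equality when
   x <= t.  Integrating against g over (0, z], and using that (t - x)^+
   vanishes for x > t, gives t p(z) <= v(t) + M(z) with equality at z = t,
   where M(z) = E_g(mu_1 1{mu_1 <= z}) = p(z) E_g(mu_1 | mu_1 <= z).  As
   lambda = n v(zeta_n), this reads r_n(z) = n (v(zeta_n) + M(z)) / p(z)
   >= n zeta_n, with equality at z = zeta_n. *)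

Section ExcessIntegrals.
Context {R : realType} {g : R -> R}.
Hypothesis mg : measurable_fun setT g.
Hypothesis g_ge0 : forall x : R, 0 < x -> 0 <= g x.

Local Notation mu := (@lebesgue_measure R).
Local Notation I z := ([set` `]0, z]%R] : set R).
Local Notation Dom := ([set` `]0, +oo[%R] : set R).
Local Notation pos_part t x := (Num.max (t - x) 0).
Local Notation mass z := (\int[mu]_(x in I z) (g x)%:E)%E.
Local Notation moment z := (\int[mu]_(x in I z) (x * g x)%:E)%E.
Local Notation excess t := (\int[mu]_(x in Dom) (pos_part t x * g x)%:E)%E.

Lemma itv_oc_sub_oo z : I z `<=` Dom.
Proof. by move=> x /=; rewrite !in_itv /= andbT => /andP[]. Qed.

Lemma in_itv_oc_gt0 z x : I z x -> 0 < x.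
Proof. by rewrite /= in_itv /= => /andP[]. Qed.

Lemma measurable_EFin_mulg {D : set R} (f : R -> R) :
  measurable_fun setT f -> measurable_fun D (fun x => (f x * g x)%:E).
Proof.
by move=> mf; apply/measurable_EFinP/measurable_funTS/measurable_funM.
Qed.

Lemma measurable_pos_part t : measurable_fun setT (fun x : R => pos_part t x).
Proof. exact/measurable_maxr/measurable_cst/measurable_funB. Qed.

Lemma pos_part_ge0 (t x : R) : 0 <= pos_part t x.
Proof. by rewrite le_max lexx orbT. Qed.

Lemma mulg_ge0 (c x : R) : 0 < x -> 0 <= c -> (0 <= (c * g x)%:E)%E.
Proof. by move=> x0 c0; rewrite lee_fin mulr_ge0 ?g_ge0. Qed.

Section ExtendedIntegrals.
Local Open Scope ereal_scope.

Lemma mass_ge0 z : 0 <= mass z.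
Proof.
by apply: integral_ge0 => x /in_itv_oc_gt0 x0; rewrite lee_fin g_ge0.
Qed.

Lemma mass_le_total z : mass z <= \int[mu]_(x in Dom) (g x)%:E.
Proof.
apply: ge0_subset_integral => //.
- exact/measurable_EFinP/measurable_funTS.
- by move=> x; rewrite /= in_itv /= andbT => x0; rewrite lee_fin g_ge0.
- exact: itv_oc_sub_oo.
Qed.

Lemma moment_ge0 z : 0 <= moment z.
Proof. by apply: integral_ge0 => x /in_itv_oc_gt0 x0; rewrite mulg_ge0 ?ltW. Qed.

Lemma excess_eq0 t : (t <= 0)%R -> excess t = 0.
Proof.
move=> t0; apply: integral0_eq => x; rewrite /= in_itv /= andbT => x0.
by rewrite max_r ?mul0r // subr_le0 (le_trans t0) ?ltW.
Qed.

Lemma excess_itv_oc t : excess t = \int[mu]_(x in I t) (pos_part t x * g x)%:E.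
Proof.
rewrite -(setIidr (itv_oc_sub_oo t)) integral_mkcondr; apply: eq_integral => x.
rewrite in_setE /= in_itv /= andbT => x0; rewrite /patch; case: ifPn => //.
rewrite notin_setE /= in_itv /= x0 /= => /negP; rewrite -ltNge => tx.
by rewrite max_r ?mul0r // subr_le0 ltW.
Qed.

Lemma excess_itv_oc_le t z :
  \int[mu]_(x in I z) (pos_part t x * g x)%:E <= excess t.
Proof.
apply: ge0_subset_integral => //.
- exact: measurable_EFin_mulg (measurable_pos_part t).
- by move=> x; rewrite /= in_itv /= andbT => x0; rewrite mulg_ge0 ?pos_part_ge0.
- exact: itv_oc_sub_oo.
Qed.

Lemma integral_itv_oc_pos_partD t z :
  \int[mu]_(x in I z) (pos_part t x * g x)%:E + moment z
  = \int[mu]_(x in I z) ((pos_part t x + x) * g x)%:E.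
Proof.
rewrite -ge0_integralD //.
- by apply: eq_integral => x _; rewrite mulrDl.
- by move=> x /in_itv_oc_gt0 x0; rewrite mulg_ge0 ?pos_part_ge0.
- exact: measurable_EFin_mulg (measurable_pos_part t).
- by move=> x /in_itv_oc_gt0 x0; rewrite mulg_ge0 ?ltW.
- exact: measurable_EFin_mulg.
Qed.

Lemma scale_mass t z : (0 <= t)%R -> t%:E * mass z = \int[mu]_(x in I z) (t * g x)%:E.
Proof.
move=> t0; rewrite -ge0_integralZl_EFin //.
- by move=> x /in_itv_oc_gt0 x0; rewrite lee_fin g_ge0.
- exact/measurable_EFinP/measurable_funTS.
Qed.

Lemma scale_mass_le t z : (0 <= t)%R -> t%:E * mass z <= excess t + moment z.
Proof.
move=> t0; apply: (le_trans _ (leeD2r _ (excess_itv_oc_le t z))).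
rewrite integral_itv_oc_pos_partD scale_mass //; apply: ge0_le_integral => //.
- by move=> x /in_itv_oc_gt0 x0; rewrite mulg_ge0.
- exact: measurable_EFin_mulg (measurable_cst t).
- by apply: measurable_EFin_mulg; apply: measurable_funD; first exact: measurable_pos_part.
move=> x /in_itv_oc_gt0 x0; rewrite lee_fin ler_wpM2r ?g_ge0 //.
by rewrite -lerBlDr le_max lexx.
Qed.

Lemma scale_mass_eq t : (0 <= t)%R -> t%:E * mass t = excess t + moment t.
Proof.
move=> t0; rewrite excess_itv_oc integral_itv_oc_pos_partD scale_mass //.
apply: eq_integral => x; rewrite in_setE /= in_itv /= => /andP[_ xt].
by rewrite max_l ?subr_ge0 // subrK.
Qed.

Lemma fin_num_mass z : \int[mu]_(x in Dom) (g x)%:E = 1 -> mass z \is a fin_num.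
Proof.
move=> g_int1; rewrite ge0_fin_numE ?mass_ge0 //.
by rewrite (le_lt_trans (mass_le_total z)) // g_int1 ltry.
Qed.

Lemma fin_num_excess_moment t : (0 <= t)%R ->
  \int[mu]_(x in Dom) (g x)%:E = 1 ->
  excess t \is a fin_num /\ moment t \is a fin_num.
Proof.
move=> t0 g_int1; apply/andP.
by rewrite -fin_numD -(scale_mass_eq _ t0) fin_numM ?fin_num_mass.
Qed.

End ExtendedIntegrals.

Lemma vg_eq0 t : t <= 0 -> vg g t = 0.
Proof. by move=> t0; rewrite /vg (excess_eq0 _ t0). Qed.

Section Normalized.
Hypothesis g_int1 : (\int[mu]_(x in Dom) (g x)%:E = 1)%E.

Lemma scale_pg_le t z : 0 <= t -> 0 <= z -> t * pg g z <= vg g t + fine (moment z).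
Proof.
move=> t0 z0; have [fin_excess _] := fin_num_excess_moment _ t0 g_int1.
have [_ fin_moment] := fin_num_excess_moment _ z0 g_int1.
rewrite -lee_fin EFinM EFinD /pg /vg !fineK ?fin_num_mass //.
exact: scale_mass_le.
Qed.

Lemma scale_pg_eq t : 0 <= t -> t * pg g t = vg g t + fine (moment t).
Proof.
move=> t0; have [fin_excess fin_moment] := fin_num_excess_moment _ t0 g_int1.
apply: EFin_inj; rewrite EFinM EFinD /pg /vg !fineK ?fin_num_mass //.
exact: scale_mass_eq.
Qed.

Lemma pg_gt0 t : 0 < t -> 0 < vg g t -> 0 < pg g t.
Proof.
move=> t0 v0; rewrite -(pmulr_rgt0 _ t0) scale_pg_eq ?ltW //.
by rewrite ltr_wpDr // fine_ge0 // moment_ge0.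
Qed.

Variable n : nat.

Lemma rn_excess t z :
  rn g (n%:R * vg g t) n z = n%:R * (vg g t + fine (moment z)) / pg g z.
Proof. by rewrite /rn /condmean; ring. Qed.

Lemma rn_ge t z : 0 <= t -> 0 <= z -> 0 < pg g z ->
  n%:R * t <= rn g (n%:R * vg g t) n z.
Proof.
move=> t0 z0 p0; rewrite rn_excess ler_pdivlMr // -mulrA ler_wpM2l //.
exact: scale_pg_le.
Qed.

Lemma rn_eq t : 0 <= t -> 0 < pg g t -> rn g (n%:R * vg g t) n t = n%:R * t.
Proof. by move=> t0 p0; rewrite rn_excess -scale_pg_eq // mulrA mulfK ?gt_eqF. Qed.

End Normalized.

End ExcessIntegrals.

Theorem lemma1 (R : realType) (g : R -> R) (lam : R) (n : nat) (zn : R) :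
  measurable_fun setT g ->
  (forall x : R, 0 < x -> 0 <= g x) ->
  (\int[@lebesgue_measure R]_(x in ([set` `]0, +oo[%R] : set R)) (g x)%:E)%E = 1%E ->
  0 < lam -> (0 < n)%N ->
  vg g zn = lam / n%:R ->
  ereal_inf [set (rn g lam n z)%:E | z in [set z : R | 0 < z /\ 0 < pg g z]]
    = (rn g lam n zn)%:E
  /\ rn g lam n zn = n%:R * zn.
Proof.
move=> mg g_ge0 g_int1 lam_gt0 n_gt0 vg_zn.
have vg_zn_gt0 : 0 < vg g zn by rewrite vg_zn divr_gt0 ?ltr0n.
have zn_gt0 : 0 < zn.
  by rewrite ltNge; apply: contraTN vg_zn_gt0 => /vg_eq0 ->; rewrite ltxx.
have -> : lam = n%:R * vg g zn by rewrite vg_zn mulrC divfK // pnatr_eq0 -lt0n.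
have pg_zn_gt0 := pg_gt0 mg g_ge0 g_int1 _ zn_gt0 vg_zn_gt0.
rewrite rn_eq ?ltW //; split => //; apply/le_anti/andP; split.
- apply: ereal_inf_lbound; exists zn => //.
  by rewrite rn_eq ?ltW.
- apply/ereal_infP => _ [z [z_gt0 pg_z_gt0] <-].
  by rewrite lee_fin rn_ge ?ltW.
Qed.
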